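(* Let $G$ be a finite simple graph of order $n$ whose adjacency matrix $A(G)$ is non-singular, and suppose $\bar d\le n-2\ln n-3$. Then $\mathcal{E}(G)\geq n-1+\bar{d}$, unless $G$ is isomorphic to the path $P_4$ or to the paw $H$.
   Context: For a finite simple graph $G$ with $n$ vertices and $m$ edges, $A(G)$ is its adjacency matrix with eigenvalues $\lambda_1\ge\cdots\ge\lambda_n$, and the energy is $\mathcal{E}(G)=\sum_{i=1}^n|\lambda_i|$. $G$ is non-singular if $A(G)$ is non-singular. $\bar d=2m/n$ is the average degree; $\ln$ is the natural logarithm. $P_4$ is the path on 4 vertices, and the paw $H$ is the graph on 4 vertices consisting of a triangle together with one extra vertex adjacent to exactly one vertex of the triangle. *)

From mathcomp Require Import all_boot all_order all_algebra.
From mathcomp Require Import all_classical all_reals all_analysis.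
Set Implicit Arguments. Unset Strict Implicit. Unset Printing Implicit Defensive.
Import Order.TTheory GRing.Theory Num.Theory.
Local Open Scope ring_scope.

Definition simple_graph (n : nat) (e : rel 'I_n) : Prop :=
  symmetric e /\ irreflexive e.

Definition adjmx (R : nzRingType) (n : nat) (e : rel 'I_n) : 'M[R]_n :=
  \matrix_(i, j) (e i j)%:R.

Definition nedges (n : nat) (e : rel 'I_n) : nat :=
  #|[set p : 'I_n * 'I_n | e p.1 p.2 && (p.1 < p.2)%N]|.

Definition avg_deg (R : realType) (n : nat) (e : rel 'I_n) : R :=
  (2 * nedges e)%:R / n%:R.

(* lam is the list of eigenvalues (with multiplicity) of the square matrix A,
   i.e. char_poly A = prod_i (X - lam_i). *)
Definition is_spectrum (R : realType) (n : nat) (A : 'M[R]_n) (lam : 'I_n -> R) : Prop :=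
  char_poly A = \prod_(i < n) ('X - (lam i)%:P).

Definition energy_of (R : realType) (n : nat) (lam : 'I_n -> R) : R :=
  \sum_(i < n) `|lam i|.

Definition graph_iso (n k : nat) (e : rel 'I_n) (e' : rel 'I_k) : Prop :=
  exists f : 'I_n -> 'I_k, bijective f /\ forall i j, e i j = e' (f i) (f j).

Definition P4 : rel 'I_4 :=
  fun i j => ((i : nat) == j.+1) || ((j : nat) == i.+1).

Definition paw_edge (a b : nat) : bool :=
  [|| (a == 0) && (b == 1), (a == 0) && (b == 2), (a == 1) && (b == 2)
    | (a == 2) && (b == 3)]%N.
Definition paw : rel 'I_4 :=
  fun i j => paw_edge i j || paw_edge j i.

(* Put x_i = |lambda_i|.  Since det A is a nonzero integer, prod_i x_i = |det A| >= 1,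
   i.e. sum_i ln x_i >= 0, and sum_i x_i^2 = tr A^2 = 2m = n dbar.  Writing
   x = 1 + ln x + (x - 1 - ln x), the energy is at least n + sum_i (x_i - 1 - ln x_i).
   If one of these gaps exceeds dbar - 1 we are done.  Otherwise every gap is below
   n - 2 ln n - 4, and the monotonicity of t - 2 ln t on [2, oo) then yields
   (x_i - 1)^2 <= (n - 2) (x_i - 1 - ln x_i); summing over i and using
   sum_i ln x_i >= 0 gives sum_i x_i >= n - 1 + dbar.
   The excluded graphs P4 and the paw have n = 4, where n - 2 ln n - 3 < 0. *)

From mathcomp Require Import all_boot all_order all_algebra.
From mathcomp Require Import all_classical all_reals all_analysis.
From mathcomp Require Import ring lra.
Set Implicit Arguments.
Unset Strict Implicit.
Unset Printing Implicit Defensive.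

Import Order.TTheory GRing.Theory Num.Theory.
Local Open Scope ring_scope.

Section LnBounds.
Variable R : realType.
Implicit Types a b t x y : R.

Lemma ln_le_subr1 x : 0 < x -> ln x <= x - 1.
Proof. by move=> x0; have := @le_ln1Dx R (x - 1); rewrite addrCA subrr addr0; apply; lra. Qed.

Lemma subr1V_le_ln x : 0 < x -> 1 - x^-1 <= ln x.
Proof. by move=> x0; have := @ln_le_subr1 x^-1; rewrite invr_gt0 lnV ?posrE //; lra. Qed.

Lemma ln_prod (I : Type) (r : seq I) (P : pred I) (f : I -> R) :
  (forall i, P i -> 0 < f i) ->
  ln (\prod_(i <- r | P i) f i) = \sum_(i <- r | P i) ln (f i).
Proof.
move=> f_gt0.
suff [] : 0 < \prod_(i <- r | P i) f i /\
          ln (\prod_(i <- r | P i) f i) = \sum_(i <- r | P i) ln (f i) by [].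
apply: (big_rec2 (fun a b => 0 < a /\ ln a = b)); first by rewrite ln1.
by move=> i a b Pi [a0 <-]; rewrite mulr_gt0 ?f_gt0 // lnM ?posrE ?f_gt0.
Qed.

Lemma ler_sub2ln a b : 2 <= a -> a <= b -> a - 2 * ln a <= b - 2 * ln b.
Proof.
move=> a2 ab; have a0 : 0 < a by lra.
have := ln_le_subr1 (divr_gt0 (lt_le_trans a0 ab) a0).
rewrite ln_div ?posrE; try lra.
have aV : a * a^-1 = 1 by rewrite mulfV ?gt_eqF.
have aV_le : a^-1 <= 2^-1 by rewrite lef_pV2 ?posrE //; lra.
have : 0 <= (b - a) * (1 - 2 * a^-1) by apply: mulr_ge0; lra.
nra.
Qed.

Lemma natr_ge6_of_sub2ln_gt4 (n : nat) : 4 < n%:R - 2 * ln (n%:R : R) -> 6 <= (n%:R : R).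
Proof.
case: n => [|n]; first by rewrite ln0 //; lra.
set N := (n.+1%:R : R) => hN; rewrite leNgt; apply/negP => N6.
have N5 : N <= 5 by rewrite ler_nat -ltnS -(ltr_nat R).
have N1 : 1 <= N by rewrite ler1n.
(* On [1, 5], N - 2 ln N <= N - 2 + 2 / N <= 4. *)
have := subr1V_le_ln (lt_le_trans ltr01 N1).
have NV_ge0 : 0 <= N^-1 by rewrite invr_ge0; lra.
have : 0 <= N^-1 * ((N - 1) * (5 - N)) by rewrite mulr_ge0 // mulr_ge0; lra.
have -> : N^-1 * ((N - 1) * (5 - N)) = 6 - N - 5 * N^-1 by field; lra.
set w := N^-1 in NV_ge0 *; lra.
Qed.

Lemma sqr_subr1_le_ln_small x : 0 < x -> x <= 1 -> (x - 1) ^+ 2 <= 4 * (x - 1 - ln x).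
Proof.
move=> x0 x1; set s := Num.sqrt x.
have s0 : 0 < s by rewrite sqrtr_gt0.
have xs : x = s ^+ 2 by rewrite sqr_sqrtr // ltW.
have s1 : s <= 1 by nra.
have := ln_le_subr1 s0.
rewrite xs lnXn // -mulr_natl => ls.
have : 0 <= (s - 1) ^+ 2 * (4 - (s + 1) ^+ 2) by rewrite mulr_ge0 ?sqr_ge0 //; nra.
nra.
Qed.

Lemma exists_root4_ge1 x : 1 <= x -> exists2 y, 1 <= y & x = y ^+ 4.
Proof.
have sqrt_ge1 z : 1 <= z -> 1 <= Num.sqrt z by move=> z1; rewrite -sqrtr1 ler_sqrt; lra.
move=> x1; exists (Num.sqrt (Num.sqrt x)); first by apply/sqrt_ge1/sqrt_ge1.
by rewrite (exprM _ 2 2) !sqr_sqrtr ?sqrtr_ge0 //; lra.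
Qed.

Lemma sqr_ln_le x : 1 <= x -> (x + 1) * ln x ^+ 2 <= (2 * x + 4) * (x - 1 - ln x).
Proof.
(* With x = y ^+ 4 we have ln x <= 4 (y - 1), which reduces the claim to a polynomial
   inequality in y. *)
move=> x1; have [y y1 xy] := exists_root4_ge1 x1.
have y0 : 0 < y by exact: lt_le_trans ltr01 y1.
set l := ln x; have l0 : 0 <= l by exact: ln_ge0.
have lm : l <= 4 * (y - 1).
  by have := ln_le_subr1 y0; rewrite /l xy lnXn // -mulr_natl; lra.
have poly : 16 * (x + 1) <= (2 * x + 4) * (y ^+ 2 + 2 * y + 3).
  rewrite -subr_ge0 xy; set z := y - 1; have z0 : 0 <= z by rewrite /z; lra.
  have -> : (2 * y ^+ 4 + 4) * (y ^+ 2 + 2 * y + 3) - 16 * (y ^+ 4 + 1) =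
    4 + 8 * z + 14 * z ^+ 2 + 40 * z ^+ 3 + 40 * z ^+ 4 + 16 * z ^+ 5 + 2 * z ^+ 6.
    by rewrite /z; ring.
  have := exprn_ge0 2 z0; have := exprn_ge0 3 z0; have := exprn_ge0 4 z0.
  have := exprn_ge0 5 z0; have := exprn_ge0 6 z0.
  lra.
have x1e : x - 1 = (y - 1) ^+ 2 * (y ^+ 2 + 2 * y + 3) + 4 * (y - 1) by rewrite xy; ring.
have : 0 <= (4 * (y - 1) - l) * ((x + 1) * (4 * (y - 1) + l) + (2 * x + 4)).
  by apply: mulr_ge0; nra.
have := sqr_ge0 (y - 1).
nra.
Qed.

Lemma sqr_subr1_le_ln_large t x : 2 <= t -> 1 < x ->
  x - 1 - ln x + 4 < t - 2 * ln t -> (x - 1) ^+ 2 <= (t - 2) * (x - 1 - ln x).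
Proof.
move=> t2 x1 ht; set l := ln x in ht *; set u := x - 1 - l in ht *.
have l0 : 0 < l by exact: ln_gt0.
have x1_gt0 : 0 < x + 1 by lra.
have lu : (x + 1) * l ^+ 2 <= (2 * x + 4) * u by exact: sqr_ln_le (ltW x1).
have u0 : 0 < u.
  have : 0 < (x + 1) * l ^+ 2 by rewrite mulr_gt0 ?exprn_gt0.
  nra.
(* For t = t0 the claim is an equality; as t - 2 ln t increases on [2, oo), it is
   enough to show t0 - 2 ln t0 <= u + 4. *)
pose t0 := x + 1 + l + l ^+ 2 / u.
have sqr_eq : (x - 1) ^+ 2 = (t0 - 2) * u by rewrite /t0 /u; field; exact: lt0r_neq0.
have t0_ge : x + 1 <= t0 by rewrite /t0 -addrA lerDl addr_ge0 ?divr_ge0 ?sqr_ge0 //; lra.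
have ratio : l ^+ 2 / u <= 2 + 2 / (x + 1).
  have -> : 2 + 2 / (x + 1) = (x + 1)^-1 * (2 * x + 4) by field; exact: lt0r_neq0.
  by rewrite ler_pdivrMr // -mulrA ler_pdivlMl.
have ln_t0 : l + 1 - x / t0 <= ln t0.
  have t0x : 0 < t0 / x by rewrite divr_gt0; lra.
  by have := subr1V_le_ln t0x; rewrite ln_div ?posrE ?invf_div -/l; lra.
have x_t0 : x / t0 <= 1 - 1 / (x + 1).
  have -> : 1 - 1 / (x + 1) = x / (x + 1) by field; exact: lt0r_neq0.
  by rewrite ler_pM2l ?lef_pV2 ?posrE; lra.
rewrite sqr_eq ler_pM2r // lerD2r leNgt; apply/negP => t_lt.
have := ler_sub2ln t2 (ltW t_lt).
have t0E : t0 = x + 1 + l + l ^+ 2 / u by [].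
have uE : u = x - 1 - l by [].
lra.
Qed.

Lemma sqr_subr1_le_ln t x : 6 <= t -> 0 < x ->
  x - 1 - ln x + 4 < t - 2 * ln t -> (x - 1) ^+ 2 <= (t - 2) * (x - 1 - ln x).
Proof.
move=> t6 x0 ht; have [x1|x1] := lerP x 1; last by apply: sqr_subr1_le_ln_large => //; lra.
have := ln_le_subr1 x0; have := sqr_subr1_le_ln_small x0 x1.
nra.
Qed.

Lemma sum_ge_sub1_add_mean_sqr (n : nat) (x : 'I_n -> R) :
  (forall i, 0 < x i) -> 1 <= \prod_i x i ->
  (\sum_i x i ^+ 2) / n%:R <= n%:R - 2 * ln (n%:R : R) - 3 ->
  n%:R - 1 + (\sum_i x i ^+ 2) / n%:R <= \sum_i x i.
Proof.
case: n x => [|n] x x_gt0 prod_ge1; first by rewrite !big_ord0 mul0r; lra.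
set N := (n.+1%:R : R); set S := \sum_i x i ^+ 2; set d := S / N => d_le.
have N0 : 0 < N by rewrite ltr0n.
have gap_ge0 i : 0 <= x i - 1 - ln (x i) by have := ln_le_subr1 (x_gt0 i); lra.
have sum_ln_ge0 : 0 <= \sum_i ln (x i) by rewrite -ln_prod // ln_ge0.
have sum1 : \sum_(i < n.+1) 1 = N by rewrite sumr_const card_ord.
have sum_x : \sum_i x i = \sum_i (x i - 1 - ln (x i)) + \sum_i ln (x i) + N.
  by rewrite -sum1 -!big_split /=; apply: eq_bigr => i _; ring.
have [/existsP [j gap_j]|small_gaps] := boolP [exists j, d - 1 <= x j - 1 - ln (x j)].
  have : x j - 1 - ln (x j) <= \sum_i (x i - 1 - ln (x i)).
    by rewrite (bigD1 j) //= lerDl sumr_ge0.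
  lra.
have gap_lt i : x i - 1 - ln (x i) + 4 < N - 2 * ln N.
  by move/existsPn/(_ i): small_gaps; rewrite -ltNge; lra.
have N6 : 6 <= N by apply: natr_ge6_of_sub2ln_gt4; have := gap_lt ord0; have := gap_ge0 ord0; lra.
have ln_le i : (N - 2) * ln (x i) <= N * x i - x i ^+ 2 - N + 1.
  by have := sqr_subr1_le_ln N6 (x_gt0 i) (gap_lt i); nra.
have sum_ln_le : (N - 2) * \sum_i ln (x i) <= \sum_i (N * x i - x i ^+ 2 - N + 1).
  by rewrite mulr_sumr; apply: ler_sum => i _; exact: ln_le.
have sum_rhs : \sum_i (N * x i - x i ^+ 2 - N + 1) = N * \sum_i x i - S - N * N + N.
  by rewrite big_split /= !sumrB -mulr_sumr !sumr_const card_ord -mulr_natr.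
have dN : d * N = S by rewrite /d mulfVK // gt_eqF.
have : 0 <= (N - 2) * \sum_i ln (x i) by apply: mulr_ge0; lra.
rewrite -(ler_pM2r N0); nra.
Qed.

End LnBounds.

Lemma horner_char_poly (R : comNzRingType) n (A : 'M[R]_n) t :
  (char_poly A).[t] = \det (t%:M - A).
Proof.
rewrite /char_poly -horner_evalE -det_map_mx; congr (\det _).
by apply/matrixP => i j; rewrite !mxE /= horner_evalE hornerD hornerN hornerMn hornerX hornerC.
Qed.

Lemma prod_XsubC_enum (R : nzRingType) (I : finType) (f : I -> R) :
  \prod_i ('X - (f i)%:P) = \prod_(x <- map f (enum I)) ('X - x%:P).
Proof. by rewrite big_map enumT. Qed.

Lemma det_split_char_poly (R : comNzRingType) n (A : 'M[R]_n) (lam : 'I_n -> R) :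
  char_poly A = \prod_i ('X - (lam i)%:P) -> \det A = \prod_i lam i.
Proof.
move=> A_split; have := char_poly_det A.
rewrite A_split prod_XsubC_enum coef0_prod_XsubC size_map size_enum_ord big_map enumT.
by move/(congr1 ( *%R ((-1) ^+ n))); rewrite !signrMK => ->.
Qed.

Lemma char_poly_sqr_split (R : numDomainType) n (A : 'M[R]_n) (lam : 'I_n -> R) :
  char_poly A = \prod_i ('X - (lam i)%:P) ->
  char_poly (A *m A) = \prod_i ('X - (lam i ^+ 2)%:P).
Proof.
move=> A_split; set P := char_poly _; set Q := \prod_i _.
have det_addr s : \det (s%:M + A) = \prod_i (s + lam i).
  have -> : s%:M + A = (-1) *: ((- s)%:M - A) by rewrite scaleN1r opprB raddfN opprK addrC.
  rewrite detZ -horner_char_poly A_split horner_prod -[n in (-1) ^+ n]card_ord -prodr_const.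
  by rewrite -big_split; apply: eq_bigr => i _; rewrite /= hornerXsubC; ring.
have PQ_sqr s : P.[s ^+ 2] = Q.[s ^+ 2].
  have -> : P.[s ^+ 2] = \det ((s%:M - A) *m (s%:M + A)).
    by rewrite horner_char_poly mulmxDr !mulmxBl -scalar_mxM scalar_mxC addrA subrK expr2.
  rewrite det_mulmx -horner_char_poly A_split det_addr /Q !horner_prod -big_split /=.
  by apply: eq_bigr => i _; rewrite !hornerXsubC; ring.
(* P - Q vanishes at the infinitely many squares k ^+ 2 of naturals. *)
apply/eqP; rewrite -subr_eq0; apply/eqP.
apply: (@roots_geq_poly_eq0 _ _ [seq k%:R ^+ 2 | k <- iota 0 (size (P - Q))]).
- by apply/allP => _ /mapP [k _ ->]; rewrite /root hornerD hornerN PQ_sqr subrr.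
- rewrite map_inj_uniq ?iota_uniq // => k l /eqP.
  by rewrite -!natrX eqr_nat eqn_sqr => /eqP.
- by rewrite size_map size_iota.
Qed.

Lemma mxtrace_sqr_split (R : numDomainType) n (A : 'M[R]_n) (lam : 'I_n -> R) :
  char_poly A = \prod_i ('X - (lam i)%:P) -> \tr (A *m A) = \sum_i lam i ^+ 2.
Proof.
case: n A lam => [|n] A lam A_split; first by rewrite /mxtrace !big_ord0.
have := char_poly_trace (A *m A) (ltn0Sn n).
rewrite (char_poly_sqr_split A_split) prod_XsubC_enum.
have := @coefPn_prod_XsubC _ [seq lam i ^+ 2 | i <- enum 'I_n.+1].
by rewrite size_map size_enum_ord => -> // /eqP; rewrite eqr_opp big_map enumT => /eqP <-.
Qed.

Lemma adjmx_intr (R : nzRingType) n (e : rel 'I_n) : adjmx R e = map_mx intr (adjmx int e).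
Proof. by apply/matrixP => i j; rewrite !mxE; case: (e i j). Qed.

Lemma norm_det_adjmx_ge1 (R : archiNumDomainType) n (e : rel 'I_n) :
  \det (adjmx R e) != 0 -> 1 <= `|\det (adjmx R e)|.
Proof. by rewrite adjmx_intr det_map_mx; apply: norm_intr_ge1 (intr_int _ _). Qed.

Lemma card_adjacent_pairs n (e : rel 'I_n) : simple_graph e ->
  #|[set p : 'I_n * 'I_n | e p.1 p.2]| = (2 * nedges e)%N.
Proof.
case=> e_sym e_irr; set L := [set p : 'I_n * 'I_n | e p.1 p.2 && (p.1 < p.2)%N].
pose swap (p : 'I_n * 'I_n) := (p.2, p.1).
have swapK : involutive swap by case.
have -> : [set p | e p.1 p.2] = L :|: swap @^-1: L.
  apply/setP => -[i j]; rewrite !inE /= (e_sym j i).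
  by case: ltngtP => [| |/val_inj ->]; rewrite ?andbT ?andbF ?orbF ?e_irr.
rewrite cardsU card_preimset; last exact: inv_inj.
have -> : L :&: swap @^-1: L = finset.set0.
  by apply/setP => -[i j]; rewrite !inE /=; case: ltngtP; rewrite ?andbF.
by rewrite cards0 subn0 addnn -mul2n.
Qed.

Lemma mxtrace_adjmx_sqr (R : nzRingType) n (e : rel 'I_n) : simple_graph e ->
  \tr (adjmx R e *m adjmx R e) = (2 * nedges e)%:R.
Proof.
move=> e_simple; rewrite -card_adjacent_pairs // -sum1_card natr_sum big_mkcond /=.
rewrite /mxtrace (eq_bigr (fun i => \sum_j adjmx R e i j * adjmx R e j i)) => [|i _];
  last by rewrite mxE.
rewrite pair_big; apply: eq_bigr => -[i j] _ /=.
by rewrite !mxE inE /= (proj1 e_simple j i); case: (e i j); rewrite ?mulr1 ?mulr0.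
Qed.

Theorem theorem3p3 (R : realType) (n : nat) (e : rel 'I_n) :
  simple_graph e ->
  \det (adjmx R e) != 0 ->
  avg_deg R e <= n%:R - 2 * ln (n%:R : R) - 3 ->
  ~ graph_iso e P4 -> ~ graph_iso e paw ->
  forall lam : 'I_n -> R, is_spectrum (adjmx R e) lam ->
    (n%:R - 1) + avg_deg R e <= energy_of lam.
Proof.
move=> e_simple det_neq0 avg_le _ _ lam A_split.
have det_eq := det_split_char_poly A_split.
have lam_gt0 i : 0 < `|lam i|.
  rewrite normr_gt0; apply: contraNneq det_neq0 => lam_i0.
  by rewrite det_eq (bigD1 i) //= lam_i0 mul0r.
have prod_ge1 : 1 <= \prod_i `|lam i| by rewrite -normr_prod -det_eq norm_det_adjmx_ge1.
have sum_sqr : \sum_i `|lam i| ^+ 2 = (2 * nedges e)%:R.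
  rewrite -(mxtrace_adjmx_sqr R e_simple) (mxtrace_sqr_split A_split).
  by apply: eq_bigr => i _; rewrite real_normK ?num_real.
rewrite /avg_deg /energy_of -sum_sqr in avg_le *.
exact: sum_ge_sub1_add_mean_sqr.
Qed.
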